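(* For each $n\ge1$ let $(B_n,X^n(0),Y^n)$ be a random element of $\overline{\mathbb{R}}_+\times\mathbb{R}^2\times D^2$, and let $(\hat X^n,\hat V^n)\in D^2\times D^2$ be the unique solution of \begin{align*} \hat{X}_1^n(t) &= X_1^n(0) + Y^{n}_1(t) + \int_0^t(-\hat{X}_1^n(s)+\hat{X}_2^n(s))\,ds - \hat{V}_1^n(t), \\ \hat{X}_2^n(t) &= X_2^n(0) + Y^{n}_2(t) - \int_0^t\hat{X}_2^n(s)\,ds +\hat{V}_1^n(t)- \hat{V}_2^n(t), \end{align*} with $\hat X_1^n\le0$, $\hat X_2^n\le B_n$, $\hat V_1^n,\hat V_2^n$ nondecreasing nonnegative, $\int_0^\infty \mathbb{1}\{\hat{X}_1^n(t) < 0\}\,d\hat{V}_1^n(t)=0$ and $\int_0^\infty \mathbb{1}\{\hat{X}_2^n(t) < B_n\}\,d\hat{V}_2^n(t)=0$. If the sequences $(X^n(0))_{n\ge1}$ and $(Y_i^n)_{n\ge1}$, $i=1,2$, are stochastically bounded, then $(\hat X^n)_{n\ge1}$ is stochastically bounded in $D^2$ (no boundedness of $B_n$ is required).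
   Context: A sequence of random elements $Z^n$ of $D$ (or $D^k$) is stochastically bounded if for every $t>0$ the sequence of real random variables $\|Z^n\|_t=\sup_{0\le s\le t}|Z^n(s)|$ (max over coordinates for $D^k$) is tight; a sequence of random vectors in $\mathbb{R}^k$ is stochastically bounded if it is tight. $D=D([0,\infty),\mathbb{R})$; $\overline{\mathbb{R}}_+=[0,\infty)\cup\{\infty\}$. *)

From HB Require Import structures.
From mathcomp Require Import all_boot all_order all_algebra.
From mathcomp Require Import all_classical all_reals all_analysis measurable_realfun.
Set Implicit Arguments. Unset Strict Implicit. Unset Printing Implicit Defensive.
Import Order.TTheory GRing.Theory Num.Theory.
Import numFieldNormedType.Exports.
Local Open Scope classical_set_scope.
Local Open Scope ring_scope.

(* A path of D = D([0,oo),R), represented as a function R -> R of which only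
   the restriction to [0,oo) matters: right-continuous at every t >= 0,
   with left limits at every t > 0. *)
Definition cadlag {R : realType} (f : R -> R) : Prop :=
  (forall t : R, 0 <= t -> f x @[x --> t^'+] --> f t) /\
  (forall t : R, 0 < t -> cvg (f x @[x --> t^'-])).

Definition supnorm {R : realType} (f : R -> R) (t : R) : \bar R :=
  ereal_sup [set (`|f s|)%:E | s in `[0, t]].

(* Tightness of a sequence of nonnegative (extended-)real random variables
   Z n defined on probability spaces (Omega n, P n):
   for every eps > 0 there is M such that, for all n, with probability at
   least 1 - eps, Z n <= M.  (Stated with an inner probability, i.e. via
   a measurable event on which the bound holds; for measurable Z n this is
   P(Z n > M) <= eps.) *)
Definition tight_seq {R : realType} (d : nat -> measure_display)
  (Omega : forall n, measurableType (d n))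
  (P : forall n, probability (Omega n) R)
  (Z : forall n, Omega n -> \bar R) : Prop :=
  forall eps : R, 0 < eps -> exists M : R, forall n : nat,
    exists A : set (Omega n), measurable A /\
      ((1 - eps)%:E <= P n A)%E /\ (forall w, A w -> (Z n w <= M%:E)%E).

Definition stoch_bounded_D2 {R : realType} (d : nat -> measure_display)
  (Omega : forall n, measurableType (d n))
  (P : forall n, probability (Omega n) R)
  (Z1 Z2 : forall n, Omega n -> R -> R) : Prop :=
  forall t : R, 0 < t ->
    tight_seq P (fun n w => Order.max (supnorm (Z1 n w) t) (supnorm (Z2 n w) t)).

Definition stoch_bounded_R2 {R : realType} (d : nat -> measure_display)
  (Omega : forall n, measurableType (d n))
  (P : forall n, probability (Omega n) R)
  (z1 z2 : forall n, Omega n -> R) : Prop :=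
  tight_seq P (fun n w => (Order.max `|z1 n w| `|z2 n w|)%:E).

Definition ext0 {R : realType} (V : R -> R) : R -> R :=
  fun t => if (0 <= t)%R then V t else 0.

(* The Lebesgue-Stieltjes (outer) measure dV of a set S of times, for a
   nondecreasing cadlag V on [0,oo) extended by 0 on (-oo,0) (so that dV
   has an atom of mass V(0) at 0). *)
Definition dLS {R : realType} (V : R -> R) (S : set R) : \bar R :=
  mu_ext (wlength (ext0 V)) (S : set (ocitv_type R)).

Definition no_charge {R : realType} (V : R -> R) (S : set R) : Prop :=
  dLS V ([set t | 0 <= t] `&` S) = 0%E.

From HB Require Import structures.
From mathcomp Require Import all_boot all_order all_algebra.
From mathcomp Require Import all_classical all_reals all_analysis measurable_realfun.
From mathcomp Require Import lra.
Set Implicit Arguments. Unset Strict Implicit. Unset Printing Implicit Defensive.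
Import Order.TTheory GRing.Theory Num.Theory.
Import numFieldNormedType.Exports.
Local Open Scope classical_set_scope.
Local Open Scope ring_scope.

(* On a time block of length 1/12 starting at c write x1 = x1(c) + e1 - dV1
   and x2 = x2(c) + e2 + dV1 - dV2, where e collects the increments of Y and
   of the drift integral.  By complementarity V1 only grows (up to a unit of
   slack) at times where x1 = 0, and V2 only where x2 >= B >= 0; this bounds
   dV1, then dV2, and hence x on the block, linearly in |x(c)| and sup |e|.
   The drift part of e is at most 1/12 of the supremum of |x| over the block
   itself, which makes the bound self-improving.  Chaining the 12t + 1 blocks
   covering [0, t] yields a deterministic bound on sup_[0,t] |x| in terms of
   bounds for |X(0)| and sup_[0,t] |Y| only; B enters solely through B >= 0.
   Tightness follows by intersecting the two events of probability at least
   1 - eps/2 on which these data bounds hold. *)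

Section StieltjesNullSets.
Context {R : realType} (W : cumulative R R).

Lemma mu_ext_wlength_set1_ge (tau c : R) :
  (forall a, a < tau -> W a <= c) ->
  ((W tau - c)%:E <= mu_ext (wlength W) ([set tau] : set (ocitv_type R)))%E.
Proof.
move=> Wc; apply: le_ereal_inf_tmp => _ [F [mF cover] <-].
have [k _ Fk_tau] := cover tau erefl.
have wge0 n : (0 <= wlength W (F n))%E by exact: wlength_ge0.
rewrite (@nneseriesD1 _ _ k xpredT) //.
apply: (@le_trans _ _ (wlength W (F k))); last first.
  by rewrite leeDl// nneseries_ge0// => n _ _; exact: wlength_ge0.
have /ocitvP [Fk0|[[a b] /= ab Fkab]] := mF k; first by rewrite Fk0 in Fk_tau.
move: Fk_tau; rewrite Fkab /= in_itv /= => /andP[atau taub].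
rewrite wlength_itv_bnd ?lee_fin; last exact: ltW.
by rewrite lerB// ?Wc//; exact: cumulative_is_nondecreasing.
Qed.

Lemma mu_ext_wlength_ocitv (a b : R) : a <= b ->
  mu_ext (wlength W) (`]a, b]%classic : set (ocitv_type R)) = (W b - W a)%:E.
Proof.
by move=> ab; rewrite measurable_mu_extE /= ?wlength_itv_bnd//; exact: is_ocitv.
Qed.

(* With tau the first time after s0 where W exceeds W t - 1, the mass of dW
   sits either on ]tau, t] or in the atom at tau, and both lie in N when no
   such q exists.  The slack 1 spares us locating the exact time at which W
   starts increasing. *)
Lemma wlength_null_increment (N : set R) (s0 t : R) :
  mu_ext (wlength W) (N : set (ocitv_type R)) = 0%E -> s0 < t ->
  W t - W s0 <= 1 \/ exists q, [/\ s0 < q, q <= t, ~ N q & W t - 1 < W q].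
Proof.
move=> N0 s0t.
have Wnd : {homo W : x y / x <= y} by exact: cumulative_is_nondecreasing.
have [|Winc] := lerP (W t - W s0) 1; [by left|right].
apply: contrapT => noq.
have inN q : s0 < q -> q <= t -> W t - 1 < W q -> N q.
  by move=> *; apply: contrapT => Nq; apply: noq; exists q.
have subN0 (X : set R) : X `<=` N ->
    (mu_ext (wlength W) (X : set (ocitv_type R)) <= 0)%E.
  by move=> XN; rewrite -N0; exact: le_mu_ext.
set c := W t - 1.
have Ws0c : W s0 < c by rewrite /c; lra.
pose A := [set q | [/\ s0 < q, q <= t & c < W q]].
have At : A t by split => //; rewrite /c; lra.
have lbA : has_lbound A by exists s0 => q [/ltW].
pose tau := inf A.
have s0tau : s0 <= tau by apply: lb_le_inf; [exists t|move=> q [/ltW]].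
have taut : tau <= t by exact: ge_inf.
have Wle_c a : a < tau -> W a <= c.
  move=> atau; have [as0|s0a] := lerP a s0.
    by rewrite ltW// (le_lt_trans (Wnd _ _ as0)).
  rewrite leNgt; apply/negP => caW.
  have /(ge_inf lbA) : A a by split => //; exact: ltW (lt_le_trans atau taut).
  by rewrite leNgt atau.
have [Wtau_c|cWtau] := lerP (W tau) c.
- have : `]tau, t]%classic `<=` N.
    move=> q /=; rewrite in_itv /= => /andP[tauq qt].
    have [p [s0p pt cWp] pq] := inf_lt (ex_intro _ t At) tauq.
    by apply: inN => //; [exact: lt_trans pq|exact: lt_le_trans (Wnd _ _ (ltW pq))].
  move/subN0; rewrite mu_ext_wlength_ocitv // lee_fin subr_le0 => Wt.
  have := le_trans Wt Wtau_c; rewrite /c; lra.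
- have s0_lt_tau : s0 < tau.
    rewrite lt_neqAle s0tau andbT; apply/eqP => s0E.
    by move: cWtau; rewrite -s0E => /(lt_trans Ws0c); rewrite ltxx.
  have : [set tau] `<=` N by move=> q ->; exact: inN.
  move/subN0/(le_trans (mu_ext_wlength_set1_ge Wle_c)).
  by rewrite lee_fin subr_le0 leNgt cWtau.
Qed.

End StieltjesNullSets.

Section NoCharge.
Context {R : realType} (V : R -> R) (S : set R).
Hypotheses (cV : cadlag V) (V0_ge0 : 0 <= V 0)
  (Vnd : forall s t, 0 <= s -> s <= t -> V s <= V t) (ncV : no_charge V S).

Lemma ext0_right_continuous : right_continuous (ext0 V).
Proof.
move=> x; rewrite /ext0; have [x0|x0] := lerP 0 x.
  apply: cvg_trans (near_eq_cvg _) (cV.1 x x0).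
  by near=> y; rewrite ifT// (le_trans x0)// ltW//; near: y; exact: nbhs_right_gt.
apply: cvg_trans (near_eq_cvg _) (cvg_cst (0 : R)).
near=> y; rewrite ifF//; apply/negbTE; rewrite -ltNge; near: y.
exact: nbhs_right_lt.
Unshelve. all: by end_near. Qed.

Lemma ext0_nondecreasing : nondecreasing (ext0 V).
Proof.
move=> x y xy; rewrite /ext0.
have [x0|x0] := lerP 0 x; have [y0|y0] := lerP 0 y => //.
- by apply: Vnd.
- by have := le_lt_trans x0 (le_lt_trans xy y0); rewrite ltxx.
- exact: le_trans V0_ge0 (Vnd (lexx 0) y0).
Qed.

Lemma no_charge_increment (s0 t : R) : s0 < t -> 0 <= t ->
  ext0 V t - ext0 V s0 <= 1 \/
  exists q, [/\ s0 < q, q <= t, 0 <= q, ~ S q & V t - 1 < V q].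
Proof.
move=> s0t t0.
pose W : cumulative R R := HB.pack (ext0 V) (isCumulative.Build R _ R (ext0 V)
  ext0_nondecreasing ext0_right_continuous).
have [|[q [s0q qt Nq Wq]]] := @wlength_null_increment _ W _ _ _ ncV s0t; first by left.
move: Wq; rewrite /= /ext0 t0; have [q0|q0] := lerP 0 q => Wq.
  by right; exists q; split => // Sq; apply: Nq.
by left; rewrite ifF; [lra|apply/negbTE; rewrite -ltNge (lt_trans s0q)].
Qed.

Lemma no_charge_push (c r : R) : 0 <= c -> c <= r ->
  V r - V c <= 1 \/ exists q, [/\ c < q, q <= r, ~ S q & V r - 1 < V q].
Proof.
move=> c0 cr; have [<-|cr'] := eqVneq c r; first by left; rewrite subrr.
have /(no_charge_increment)[] : c < r by rewrite lt_neqAle cr' cr.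
- exact: le_trans cr.
- by rewrite /ext0 c0 (le_trans c0 cr); left.
- by move=> [q [? ? _ ? ?]]; right; exists q.
Qed.

Lemma no_charge_at0 : V 0 <= 1 \/ ~ S 0.
Proof.
have [|[q [_ qle q0 Sq _]]] := @no_charge_increment (-1) 0 (ltrN10 R) (lexx 0).
- by rewrite /ext0 lexx ifF ?subr0; [left|apply/negbTE; rewrite -ltNge ltrN10].
- by right; suff <- : q = 0 by []; apply/le_anti; rewrite qle q0.
Qed.

End NoCharge.

Section RightContinuousMeasurable.
Context {R : realType}.

Lemma measurable_fun_grid_right (f : R -> R) (k r : R) : 0 < k ->
  measurable_fun `[0, r] (fun x => f ((Num.truncn (x * k)).+1%:R / k)).
Proof.
move=> k0 _ Y mY.
rewrite (_ : _ `&` _ = \bigcup_n (`[0, r] `&` (`[n%:R / k, n.+1%:R / k[%classic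
      `&` (if pselect (Y (f (n.+1%:R / k))) then setT else set0)))).
  apply: bigcupT_measurable => n; apply: measurableI; first exact: measurable_itv.
  apply: measurableI; first exact: measurable_itv.
  by case: pselect => ?; [exact: measurableT|exact: measurable0].
apply/seteqP; split => x /=.
  move=> [Dx Yx]; exists (Num.truncn (x * k)) => //; split => //.
  have x0 : 0 <= x by move: Dx; rewrite /= in_itv /= => /andP[].
  have /andP[h1 h2] := truncn_itv (mulr_ge0 x0 (ltW k0)).
  split; first by rewrite /= in_itv /= ler_pdivrMr // ltr_pdivlMr // h1.
  by case: pselect.
move=> [n _ [Dx [xn]]]; case: pselect => // Yn _; split => //.
have x0 : 0 <= x by move: Dx; rewrite /= in_itv /= => /andP[].
move: xn; rewrite /= in_itv /= ler_pdivrMr // ltr_pdivlMr // => xn.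
by rewrite (truncn_def xn).
Qed.

Lemma right_continuous_measurable (f : R -> R) (r : R) :
  (forall t, 0 <= t -> f x @[x --> t^'+] --> f t) -> measurable_fun `[0, r] f.
Proof.
move=> rc.
pose k (n : nat) : R := n.+1%:R.
have k0 n : 0 < k n by rewrite ltr0Sn.
pose u (n : nat) (x : R) := (Num.truncn (x * k n)).+1%:R / k n.
apply: (@measurable_fun_cvg _ _ _ _ (fun n x => f (u n x))).
  by move=> n; exact: measurable_fun_grid_right.
move=> x /=; rewrite in_itv /= => /andP[x0 _].
apply: ((cvg_at_rightP f x (f x)).1 (rc x x0) (u ^~ x)); split.
  by move=> n; rewrite /u ltr_pdivlMr //; exact: truncnS_gt.
apply: (@squeeze_cvgr _ _ _ _ (fun _ => x) (fun n => x + harmonic n)).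
- near=> n; apply/andP; split.
    by rewrite /u ler_pdivlMr //; apply: ltW; exact: truncnS_gt.
  rewrite /u /harmonic /= -/(k n) ler_pdivrMr // mulrDl mulVf ?gt_eqF//.
  by rewrite -natr1 lerD2r truncn_le mulr_ge0// ltW.
- exact: cvg_cst.
- rewrite -[X in _ --> X]addr0; apply: cvgD; first exact: cvg_cst.
  exact: cvg_harmonic.
Unshelve. all: by end_near. Qed.

End RightContinuousMeasurable.

Lemma cadlag_bounded {R : realType} (f : R -> R) (T : R) : cadlag f ->
  exists M, forall s, 0 <= s -> s <= T -> `|f s| <= M.
Proof.
move=> [rc ll].
have /compact_near_coveringP/near_covering_withinP cover : compact `[0, T]%classic.
  exact: segment_compact.
have : \forall M \near +oo, `[0, T]%classic `<=` (fun s => `|f s| <= M).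
  apply: cover => x; rewrite /= in_itv /= => /andP[x0 xT].
  pose l := lim (f z @[z --> x^'-]).
  pose c := `|f x| + `|l| + 1.
  have right_bound : \forall y \near x, x < y -> `|f y| <= c.
    have := rc x x0 => /(@cvgr_dist_lt _ R^o) /(_ _ ltr01); rewrite near_withinE.
    apply: filterS => y fy xy; have := fy xy => /= fxy.
    rewrite -(subrK (f x) (f y)); apply: le_trans (ler_normD _ _) _.
    rewrite /c addrC -addrA lerD2l distrC; apply: (le_trans (ltW fxy)).
    by rewrite lerDr.
  have left_bound : \forall y \near x, y < x -> 0 <= y -> `|f y| <= c.
    have [xp|xn] := ltrP 0 x.
      have := ll x xp => /(@cvgr_dist_lt _ R^o) /(_ _ ltr01); rewrite near_withinE.
      apply: filterS => y fy yx _; have := fy yx => /= fyl.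
      rewrite -(subrK l (f y)); apply: le_trans (ler_normD _ _) _.
      rewrite /c addrC -addrA [`|f x| + _]addrC -addrA lerD2l distrC.
      by apply: (le_trans (ltW fyl)); rewrite addrC lerDr.
    by near=> y => yx y0; have := le_lt_trans y0 (lt_le_trans yx xn); rewrite ltxx.
  near=> y M => /=; rewrite in_itv /= => /andP[y0 yT].
  have cM : c <= M by near: M; apply: nbhs_pinfty_ge; rewrite num_real.
  apply: le_trans cM; have [yx|xy|->] := ltgtP y x.
  - by move: yx y0; near: y.
  - by move: xy; near: y.
  - by rewrite /c -addrA lerDl.
move=> [c [_ fc]]; exists (`|c| + 1) => s s0 sT; apply: (fc (`|c| + 1)).
  by rewrite (le_lt_trans (ler_norm c))// ltrDl.
by rewrite /= in_itv /= s0 sT.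
Unshelve. all: by end_near. Qed.

Section IntegralIncrement.
Context {R : realType}.
Local Notation mu := (@lebesgue_measure R).

Lemma bounded_integrable (f : R -> R) (D : set R) (G : R) : measurable D ->
  (mu D < +oo)%E -> measurable_fun D f ->
  (forall u, D u -> `|f u| <= G) -> mu.-integrable D (EFin \o f).
Proof.
move=> mD Dfin mf fG; apply: measurable_bounded_integrable => //.
rewrite /bounded_near; near=> M => u /= Du; apply: le_trans (fG u Du) _.
by near: M; apply: nbhs_pinfty_ge; exact: num_real.
Unshelve. all: by end_near. Qed.

Lemma Rintegral_increment_le (f : R -> R) (s0 r m G : R) :
  measurable_fun `[0, r] f -> (forall u, 0 <= u -> u <= r -> `|f u| <= G) ->
  0 <= s0 -> s0 <= r -> (forall u, s0 < u -> u <= r -> `|f u| <= m) ->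
  `|Rintegral mu `[0, r] f - Rintegral mu `[0, s0] f| <= (r - s0) * m.
Proof.
move=> mf fG s00 s0r fm.
have [->|s0_neq_r] := eqVneq s0 r; first by rewrite !subrr normr0 mul0r.
have s0_lt_r : s0 < r by rewrite lt_neqAle s0_neq_r s0r.
have ifr : mu.-integrable `[0, r] (EFin \o f).
  apply: (bounded_integrable (G := G)) => //.
  - by rewrite lebesgue_measure_itv; case: ifP => _; rewrite ?ltry.
  - by move=> u /=; rewrite in_itv /= => /andP[]; exact: fG.
rewrite Rintegral_itvB //.
have sub : `]s0, r]%classic `<=` `[0, r]%classic.
  by move=> u /=; rewrite !in_itv /= => /andP[su ->]; rewrite (le_trans s00 (ltW su)).
have ifs : mu.-integrable `]s0, r] (EFin \o f).
  by apply: integrableS ifr => //; exact: measurable_itv.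
have : `|Rintegral mu `]s0, r] f| <= Rintegral mu `]s0, r] (fun t => `|f t|).
  by apply: le_normr_Rintegral => //; exact: measurable_itv.
move/le_trans; apply.
apply: (@le_trans _ _ (Rintegral mu `]s0, r] (fun=> m))).
  apply: le_Rintegral.
  - exact: measurable_itv.
  - exact: integrable_norm.
  - apply: (@bounded_integrable _ _ `|m|).
    + exact: measurable_itv.
    + by rewrite lebesgue_measure_itv; case: ifP => _; rewrite ?ltry.
    + exact: measurable_cst.
    + by [].
  - by move=> u /=; rewrite in_itv /= => /andP[]; exact: fm.
rewrite Rintegral_cst; last exact: measurable_itv.
suff -> : fine (mu `]s0, r]%classic) = r - s0 by rewrite mulrC.
by rewrite lebesgue_measure_itv /= lte_fin s0_lt_r -EFinD.
Qed.

End IntegralIncrement.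

Lemma probability_setI_ge {R : realType} d (T : measurableType d)
  (P : probability T R) (A B : set T) (e : R) : measurable A -> measurable B ->
  ((1 - e / 2)%:E <= P A)%E -> ((1 - e / 2)%:E <= P B)%E ->
  ((1 - e)%:E <= P (A `&` B))%E.
Proof.
move=> mA mB PA PB.
have finP X : measurable X -> P X = (fine (P X))%:E.
  move=> mX; rewrite fineK // ge0_fin_numE //.
  exact: le_lt_trans (probability_le1 P mX) (ltry _).
have mAB := measurableI _ _ mA mB; have mAuB := measurableU _ _ mA mB.
have PBfin : (P B < +oo)%E by rewrite (finP _ mB) ltry.
have : P (A `|` B) = (P A + P B - P (A `&` B))%E by exact: measureUfinr.
have := probability_le1 P mAuB.
move: PA PB; rewrite (finP _ mA) (finP _ mB) (finP _ mAB) (finP _ mAuB) !lee_fin.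
by rewrite -EFinD => PA PB PU [] PUE; lra.
Qed.

Section ReflectionBounds.
Context {R : realType}.

Lemma reflection_bound (J : set R) (x1 x2 v1 v2 e1 e2 : R -> R) (b1 b2 y : R) :
  (forall r, J r -> x1 r = b1 + e1 r - v1 r) ->
  (forall r, J r -> x2 r = b2 + e2 r + v1 r - v2 r) ->
  (forall r, J r -> `|e1 r| <= y /\ `|e2 r| <= y) ->
  (forall r, J r -> 0 <= v1 r /\ 0 <= v2 r) ->
  (forall r, J r -> v1 r <= 1 \/ exists q, [/\ J q, 0 <= x1 q & v1 r - 1 < v1 q]) ->
  (forall r, J r -> v2 r <= 1 \/ exists q, [/\ J q, 0 <= x2 q & v2 r - 1 < v2 q]) ->
  forall r, J r -> `|x1 r| + `|x2 r| <= 4 * (`|b1| + `|b2|) + 6 * y + 4.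
Proof.
move=> x1E x2E e_le v_ge0 v1_push v2_push.
have := normr_ge0 b1; have := normr_ge0 b2 => b2_ge0 b1_ge0.
have /andP[b1_ge b1_le] : - `|b1| <= b1 <= `|b1| by rewrite -ler_norml.
have /andP[b2_ge b2_le] : - `|b2| <= b2 <= `|b2| by rewrite -ler_norml.
have e_bounds r : J r -> [/\ - y <= e1 r, e1 r <= y, - y <= e2 r & e2 r <= y].
  by move=> Jr; have [] := e_le r Jr; rewrite !ler_norml => /andP[? ?] /andP[? ?].
have y_ge0 r : J r -> 0 <= y by move=> Jr; exact: le_trans (e_le r Jr).1.
have v1_le r : J r -> v1 r <= `|b1| + y + 1.
  move=> Jr; have := y_ge0 r Jr; have [v1r|[q [Jq x1q v1q]]] := v1_push r Jr.
    by lra.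
  by have := x1E q Jq; have [] := e_bounds q Jq; lra.
have v2_le r : J r -> v2 r <= `|b1| + `|b2| + 2 * y + 2.
  move=> Jr; have := y_ge0 r Jr; have [v2r|[q [Jq x2q v2q]]] := v2_push r Jr.
    by lra.
  by have := x2E q Jq; have := v1_le q Jq; have [] := e_bounds q Jq; lra.
move=> r Jr; have := v1_le r Jr; have := v2_le r Jr; have := y_ge0 r Jr.
have [? ? ? ?] := e_bounds r Jr; have [? ?] := v_ge0 r Jr.
have := x1E r Jr; have := x2E r Jr; move=> *.
have : `|x1 r| <= 2 * `|b1| + 2 * y + 1 by rewrite ler_norml; apply/andP; split; lra.
have : `|x2 r| <= 2 * `|b1| + 2 * `|b2| + 4 * y + 3.
  by rewrite ler_norml; apply/andP; split; lra.
lra.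
Qed.

Lemma self_improving_bound (J : set R) (g : R -> R) (C G : R) :
  J !=set0 -> (forall r, J r -> g r <= G) ->
  (forall m, (forall r, J r -> g r <= m) -> forall r, J r -> g r <= C + m / 2) ->
  forall r, J r -> g r <= 2 * C.
Proof.
move=> [r0 Jr0] gG improve r Jr.
have g_le_sup u : J u -> g u <= sup (g @` J).
  by move=> Ju; apply: ub_le_sup; [exists G => _ [v Jv <-]; exact: gG|exists u].
have : sup (g @` J) <= C + sup (g @` J) / 2.
  apply: ge_sup; first by exists (g r0), r0.
  by move=> _ [u Ju <-]; exact: improve.
by have := g_le_sup r Jr; lra.
Qed.

(* The drift terms e_i are controlled by the bound m being sought: over a
   time block of length 1/12 they contribute at most m / 12, and the factor
   6 / 12 < 1 in front of m lets the bound close on itself. *)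
Lemma reflection_block_bound (J : set R) (x1 x2 v1 v2 e1 e2 : R -> R)
    (b1 b2 y G : R) :
  J !=set0 -> (forall r, J r -> `|x1 r| + `|x2 r| <= G) ->
  (forall r, J r -> x1 r = b1 + e1 r - v1 r) ->
  (forall r, J r -> x2 r = b2 + e2 r + v1 r - v2 r) ->
  (forall m, (forall r, J r -> `|x1 r| + `|x2 r| <= m) ->
     forall r, J r -> `|e1 r| <= y + m / 12 /\ `|e2 r| <= y + m / 12) ->
  (forall r, J r -> 0 <= v1 r /\ 0 <= v2 r) ->
  (forall r, J r -> v1 r <= 1 \/ exists q, [/\ J q, 0 <= x1 q & v1 r - 1 < v1 q]) ->
  (forall r, J r -> v2 r <= 1 \/ exists q, [/\ J q, 0 <= x2 q & v2 r - 1 < v2 q]) ->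
  forall r, J r -> `|x1 r| + `|x2 r| <= 8 * (`|b1| + `|b2|) + 12 * y + 8.
Proof.
move=> J0 xG x1E x2E e_le v_ge0 v1_push v2_push r Jr.
have -> : 8 * (`|b1| + `|b2|) + 12 * y + 8 =
    2 * (4 * (`|b1| + `|b2|) + 6 * y + 4) by lra.
apply: (self_improving_bound J0 xG) => // m xm u Ju.
have := reflection_bound x1E x2E (e_le m xm) v_ge0 v1_push v2_push Ju.
by rewrite mulrDr; lra.
Qed.

End ReflectionBounds.

Section Supnorm.
Context {R : realType}.

Lemma le_supnorm (f : R -> R) (t s : R) : 0 <= s -> s <= t ->
  ((`|f s|)%:E <= supnorm f t)%E.
Proof. by move=> s0 st; apply: ereal_sup_ubound; exists s; rewrite //= in_itv /= s0 st. Qed.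

Lemma supnorm_le (f : R -> R) (t M : R) :
  (forall s, 0 <= s -> s <= t -> `|f s| <= M) -> (supnorm f t <= M%:E)%E.
Proof.
move=> fM; apply: ge_ereal_sup => _ [s /= + <-].
by rewrite in_itv /= lee_fin => /andP[s0 st]; exact: fM.
Qed.

End Supnorm.

Record reflected_solution {R : realType} (x1 x2 V1 V2 Y1 Y2 : R -> R)
    (a1 a2 : R) (B : \bar R) : Prop := ReflectedSolution {
  cadlag_x1 : cadlag x1;
  cadlag_x2 : cadlag x2;
  cadlag_V1 : cadlag V1;
  cadlag_V2 : cadlag V2;
  x1_eq : forall t, 0 <= t -> x1 t = a1 + Y1 t
    + Rintegral lebesgue_measure `[0, t] (fun s => - x1 s + x2 s) - V1 t;
  x2_eq : forall t, 0 <= t -> x2 t = a2 + Y2 t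
    - Rintegral lebesgue_measure `[0, t] (fun s => x2 s) + V1 t - V2 t;
  barrier_ge0 : (0 <= B)%E;
  V_ge0 : forall t, 0 <= t -> 0 <= V1 t /\ 0 <= V2 t;
  V_nondecreasing : forall s t, 0 <= s -> s <= t -> V1 s <= V1 t /\ V2 s <= V2 t;
  no_charge_V1 : no_charge V1 [set t | x1 t < 0];
  no_charge_V2 : no_charge V2 [set t | ((x2 t)%:E < B)%E] }.

Section ReflectedSystem.
Context {R : realType}.
Local Notation mu := (@lebesgue_measure R).
Variables (x1 x2 V1 V2 Y1 Y2 : R -> R) (a1 a2 : R) (B : \bar R) (T y : R).
Hypothesis sol : reflected_solution x1 x2 V1 V2 Y1 Y2 a1 a2 B.

Let I1 r := Rintegral mu `[0, r] (fun s => - x1 s + x2 s).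
Let I2 r := Rintegral mu `[0, r] (fun s => x2 s).

Let V1_nd s t : 0 <= s -> s <= t -> V1 s <= V1 t.
Proof. by move=> s0 st; have [] := V_nondecreasing sol s0 st. Qed.

Let V2_nd s t : 0 <= s -> s <= t -> V2 s <= V2 t.
Proof. by move=> s0 st; have [] := V_nondecreasing sol s0 st. Qed.

Let V1_0 : 0 <= V1 0. Proof. by have [] := V_ge0 sol (lexx 0). Qed.
Let V2_0 : 0 <= V2 0. Proof. by have [] := V_ge0 sol (lexx 0). Qed.

Let x2_ge0 q : ~ ((x2 q)%:E < B)%E -> 0 <= x2 q.
Proof.
by move/negP; rewrite -leNgt => /(le_trans (barrier_ge0 sol)); rewrite lee_fin.
Qed.

Lemma V1_push c r : 0 <= c -> c <= r ->
  V1 r - V1 c <= 1 \/ exists q, [/\ c < q, q <= r, 0 <= x1 q & V1 r - 1 < V1 q].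
Proof.
move=> c0 cr.
have [|[q [cq qr Sq V1q]]] := no_charge_push (cadlag_V1 sol) V1_0 V1_nd (no_charge_V1 sol) c0 cr.
  by left.
by right; exists q; split => //; rewrite leNgt; apply/negP.
Qed.

Lemma V2_push c r : 0 <= c -> c <= r ->
  V2 r - V2 c <= 1 \/ exists q, [/\ c < q, q <= r, 0 <= x2 q & V2 r - 1 < V2 q].
Proof.
move=> c0 cr.
have [|[q [cq qr Sq V2q]]] := no_charge_push (cadlag_V2 sol) V2_0 V2_nd (no_charge_V2 sol) c0 cr.
  by left.
by right; exists q; split => //; exact: x2_ge0.
Qed.

Lemma initial_state_bound : `|a1| <= y -> `|a2| <= y -> `|Y1 0| <= y /\ `|Y2 0| <= y ->
  `|x1 0| + `|x2 0| <= 14 * y + 4.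
Proof.
move=> a1_le a2_le Y0_le.
have I0 (f : R -> R) : Rintegral mu `[0, 0] f = 0 by rewrite set_itv1 Rintegral_set1.
have bound := @reflection_bound R [set 0] x1 x2 V1 V2 Y1 Y2 a1 a2 y.
apply: le_trans (bound _ _ _ _ _ _ 0 erefl) _ => [r ->|r ->|r ->|r ->|r ->|r ->|].
- by rewrite (x1_eq sol) // I0 addr0.
- by rewrite (x2_eq sol) // I0 subr0.
- exact: Y0_le.
- by split.
- have [|Sx] := no_charge_at0 (cadlag_V1 sol) V1_0 V1_nd (no_charge_V1 sol); first by left.
  by right; exists 0; split => //; [rewrite leNgt; exact/negP|rewrite ltrBlDr ltrDl].
- have [|Sx] := no_charge_at0 (cadlag_V2 sol) V2_0 V2_nd (no_charge_V2 sol); first by left.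
  by right; exists 0; split => //; [exact: x2_ge0|rewrite ltrBlDr ltrDl].
- lra.
Qed.

Let x_bounded : exists G, forall r, 0 <= r -> r <= T -> `|x1 r| + `|x2 r| <= G.
Proof.
have [G1 xG1] := cadlag_bounded T (cadlag_x1 sol).
have [G2 xG2] := cadlag_bounded T (cadlag_x2 sol).
by exists (G1 + G2) => r r0 rT; rewrite lerD ?xG1 ?xG2.
Qed.

Lemma drift1_increment c r m : 0 <= c -> c <= r -> r <= T ->
  (forall u, c < u -> u <= r -> `|x1 u| + `|x2 u| <= m) ->
  `|I1 r - I1 c| <= (r - c) * m.
Proof.
move=> c0 cr rT xm; have [G xG] := x_bounded.
apply: (Rintegral_increment_le (G := G)) => //.
- apply: right_continuous_measurable => t t0; apply: cvgD.
    by apply: cvgN; exact: (cadlag_x1 sol).1.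
  exact: (cadlag_x2 sol).1.
- move=> u u0 ur; rewrite (le_trans (ler_normD _ _))// normrN.
  exact: xG (le_trans ur rT).
- by move=> u cu ur; rewrite (le_trans (ler_normD _ _))// normrN xm.
Qed.

Lemma drift2_increment c r m : 0 <= c -> c <= r -> r <= T ->
  (forall u, c < u -> u <= r -> `|x1 u| + `|x2 u| <= m) ->
  `|I2 r - I2 c| <= (r - c) * m.
Proof.
move=> c0 cr rT xm; have [G xG] := x_bounded.
apply: (Rintegral_increment_le (G := G)) => //.
- by apply: right_continuous_measurable => t t0; exact: (cadlag_x2 sol).1.
- move=> u u0 ur; apply: le_trans (xG u u0 (le_trans ur rT)).
  by rewrite lerDr.
- by move=> u cu ur; apply: le_trans (xm u cu ur); rewrite lerDr.
Qed.

Lemma block_step c : 0 <= c -> c <= T ->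
  (forall s, 0 <= s -> s <= T -> `|Y1 s| <= y /\ `|Y2 s| <= y) ->
  forall s, c <= s -> s <= T -> s <= c + 1 / 12 ->
  `|x1 s| + `|x2 s| <= 8 * (`|x1 c| + `|x2 c|) + 24 * y + 8.
Proof.
move=> c0 cT Y_le s cs sT sc.
pose J := [set r | [/\ c <= r, r <= T & r <= c + 1 / 12]].
have Jc : J c by split => //; lra.
have J_ge0 r : J r -> 0 <= r by case=> cr _ _; exact: le_trans cr.
have J_between r u : J r -> c < u -> u <= r -> J u.
  by move=> [_ rT rc] cu ur; split; [exact: ltW|exact: le_trans rT|exact: le_trans rc].
have [G xG] := x_bounded.
have bound := @reflection_block_bound R J x1 x2
  (fun r => V1 r - V1 c) (fun r => V2 r - V2 c)
  (fun r => (Y1 r - Y1 c) + (I1 r - I1 c)) (fun r => (Y2 r - Y2 c) - (I2 r - I2 c))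
  (x1 c) (x2 c) (2 * y) G.
apply: le_trans (bound _ _ _ _ _ _ _ _ s _) _.
- by exists c.
- by move=> r [cr rT _]; exact: xG (le_trans c0 cr) rT.
- by move=> r /J_ge0 r0; rewrite (x1_eq sol r0) (x1_eq sol c0) /I1; lra.
- by move=> r /J_ge0 r0; rewrite (x2_eq sol r0) (x2_eq sol c0) /I2; lra.
- move=> m xm r Jr; have [cr rT rc] := Jr.
  have m_ge0 : 0 <= m by apply: le_trans (xm c Jc); exact: addr_ge0.
  have xm' u : c < u -> u <= r -> `|x1 u| + `|x2 u| <= m.
    by move=> cu ur; apply: xm; exact: J_between Jr cu ur.
  have := drift1_increment c0 cr rT xm'; have := drift2_increment c0 cr rT xm'.
  have : (r - c) * m <= 1 / 12 * m by apply: ler_wpM2r => //; lra.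
  have [Y1r Y2r] := Y_le r (le_trans c0 cr) rT; have [Y1c Y2c] := Y_le c c0 cT.
  have := ler_normB (Y1 r) (Y1 c); have := ler_normB (Y2 r) (Y2 c).
  have := ler_normD (Y1 r - Y1 c) (I1 r - I1 c).
  have := ler_normB (Y2 r - Y2 c) (I2 r - I2 c).
  by move=> *; split; lra.
- move=> r [cr rT _]; rewrite !subr_ge0.
  by split; [exact: V1_nd|exact: V2_nd].
- move=> r Jr; have [cr _ _] := Jr.
  have [|[q [cq qr x1q V1q]]] := V1_push c0 cr; first by left.
  by right; exists q; split => //; [exact: J_between Jr cq qr|lra].
- move=> r Jr; have [cr _ _] := Jr.
  have [|[q [cq qr x2q V2q]]] := V2_push c0 cr; first by left.
  by right; exists q; split => //; [exact: J_between Jr cq qr|lra].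
- by [].
- by lra.
Qed.

Lemma horizon_bound : `|a1| <= y -> `|a2| <= y ->
  (forall s, 0 <= s -> s <= T -> `|Y1 s| <= y /\ `|Y2 s| <= y) ->
  forall k s, 0 <= s -> s <= T -> s <= k%:R / 12 ->
  `|x1 s| + `|x2 s| <= iter k (fun b => 8 * b + 24 * y + 8) (14 * y + 4).
Proof.
move=> a1_le a2_le Y_le; have y_ge0 : 0 <= y by exact: le_trans a1_le.
elim=> [|k IH] s s0 sT sk.
  have s_eq0 : s = 0 by apply/le_anti; rewrite s0 andbT; rewrite mul0r in sk.
  rewrite s_eq0 initial_state_bound //; exact: Y_le (lexx 0) (le_trans s0 sT).
rewrite iterS; move: (iter k _ _) IH => b IH.
have k_ge0 : 0 <= k%:R / 12 :> R by rewrite divr_ge0.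
have b_ge0 : 0 <= b.
  by apply: le_trans (IH 0 (lexx 0) (le_trans s0 sT) k_ge0); exact: addr_ge0.
have [s_le|s_gt] := lerP s (k%:R / 12).
  by apply: le_trans (IH s s0 sT s_le) _; lra.
have kT : k%:R / 12 <= T by exact: le_trans (ltW s_gt) sT.
apply: le_trans (block_step k_ge0 kT Y_le (ltW s_gt) sT _) _.
  by rewrite -mulrDl natr1.
by have := IH _ k_ge0 kT (lexx _); lra.
Qed.

End ReflectedSystem.

Unset Implicit Arguments.

Theorem mainTheorem7 (R : realType) (d : nat -> measure_display)
  (Omega : forall n, measurableType (d n))
  (P : forall n, probability (Omega n) R)
  (B : forall n, Omega n -> \bar R)
  (X10 X20 : forall n, Omega n -> R)
  (Y1 Y2 : forall n, Omega n -> R -> R)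
  (Xh1 Xh2 Vh1 Vh2 : forall n, Omega n -> R -> R) :
  (forall n, measurable_fun setT (B n)) ->
  (forall n w, (0 <= B n w)%E) ->
  (forall n, measurable_fun setT (X10 n)) ->
  (forall n, measurable_fun setT (X20 n)) ->
  (forall n t, 0 <= t -> measurable_fun setT (fun w => Y1 n w t)) ->
  (forall n t, 0 <= t -> measurable_fun setT (fun w => Y2 n w t)) ->
  (forall n w, cadlag (Y1 n w) /\ cadlag (Y2 n w)) ->
  (forall n w, cadlag (Xh1 n w) /\ cadlag (Xh2 n w) /\
               cadlag (Vh1 n w) /\ cadlag (Vh2 n w)) ->
  (forall n w t, 0 <= t ->
     Xh1 n w t = X10 n w + Y1 n w t
                 + Rintegral lebesgue_measure `[0, t]
                     (fun s => - Xh1 n w s + Xh2 n w s)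
                 - Vh1 n w t) ->
  (forall n w t, 0 <= t ->
     Xh2 n w t = X20 n w + Y2 n w t
                 - Rintegral lebesgue_measure `[0, t] (fun s => Xh2 n w s)
                 + Vh1 n w t - Vh2 n w t) ->
  (forall n w t, 0 <= t -> Xh1 n w t <= 0) ->
  (forall n w t, 0 <= t -> ((Xh2 n w t)%:E <= B n w)%E) ->
  (forall n w t, 0 <= t -> 0 <= Vh1 n w t /\ 0 <= Vh2 n w t) ->
  (forall n w s t, 0 <= s -> s <= t ->
     Vh1 n w s <= Vh1 n w t /\ Vh2 n w s <= Vh2 n w t) ->
  (forall n w, no_charge (Vh1 n w) [set t | Xh1 n w t < 0]) ->
  (forall n w, no_charge (Vh2 n w) [set t | ((Xh2 n w t)%:E < B n w)%E]) ->
  stoch_bounded_R2 P X10 X20 ->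
  stoch_bounded_D2 P Y1 Y2 ->
  stoch_bounded_D2 P Xh1 Xh2.
Proof.
move=> _ B_ge0 _ _ _ _ _ cadlagXV X1E X2E _ _ Vh_ge0 Vh_nd ncV1 ncV2 sbX sbY.
move=> t t0 eps eps0; have eps2 : 0 < eps / 2 by rewrite divr_gt0.
have [M1 HM1] := sbX _ eps2; have [M2 HM2] := sbY t t0 _ eps2.
pose y := `|M1| + `|M2|; pose k := (Num.truncn (12 * t)).+1.
exists (iter k (fun b => 8 * b + 24 * y + 8) (14 * y + 4)) => n.
have [A1 [mA1 [PA1 A1X]]] := HM1 n; have [A2 [mA2 [PA2 A2Y]]] := HM2 n.
exists (A1 `&` A2); split; first exact: measurableI.
split; first exact: probability_setI_ge mA1 mA2 PA1 PA2.
move=> w [/A1X /= + /A2Y /=]; rewrite lee_fin ge_max => /andP[X1_le X2_le].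
rewrite ge_max => /andP[Y1_le Y2_le]; rewrite ge_max.
have [cx1 [cx2 [cV1 cV2]]] := cadlagXV n w.
have sol := ReflectedSolution cx1 cx2 cV1 cV2 (X1E n w) (X2E n w) (B_ge0 n w)
  (Vh_ge0 n w) (Vh_nd n w) (ncV1 n w) (ncV2 n w).
have M1y : `|M1| <= y by rewrite lerDl.
have M2y : (M2%:E <= y%:E)%E by rewrite lee_fin (le_trans (ler_norm _))// lerDr.
have Y_le s : 0 <= s -> s <= t -> `|Y1 n w s| <= y /\ `|Y2 n w s| <= y.
  by move=> s0 st; rewrite -!lee_fin !(le_trans (le_supnorm _ s0 st))// (le_trans _ M2y).
have bound := horizon_bound sol (le_trans (le_trans X1_le (ler_norm _)) M1y)
  (le_trans (le_trans X2_le (ler_norm _)) M1y) Y_le.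
have tk : t <= k%:R / 12 by rewrite ler_pdivlMr// mulrC; exact/ltW/truncnS_gt.
apply/andP; split; apply: supnorm_le => s s0 st.
- by apply: le_trans _ (bound k s s0 st (le_trans st tk)); rewrite lerDl.
- by apply: le_trans _ (bound k s s0 st (le_trans st tk)); rewrite lerDr.
Qed.
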